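(* For every real number $\gamma>0$ there exists an approval-based committee election instance $(N,C,\mathbf{A},k)$ (with at least one cohesive group) whose maximum JR degree $c^\ast_{\mathrm{JR}}$ and maximum EJR degree $c^\ast_{\mathrm{EJR}}$ satisfy all of the following: (1) $c^\ast_{\mathrm{JR}}/c^\ast_{\mathrm{EJR}}>\gamma$; (2) every committee $W\subseteq C$ with $|W|=k$ whose EJR degree equals $c^\ast_{\mathrm{EJR}}$ has JR degree at most $c^\ast_{\mathrm{JR}}/\gamma$; (3) every committee $W\subseteq C$ with $|W|=k$ whose JR degree equals $c^\ast_{\mathrm{JR}}$ has EJR degree at most $c^\ast_{\mathrm{EJR}}/\gamma$.
   Context: An instance consists of a set of voters $N=\{1,\dots,n\}$, a set of candidates $C$, approval ballots $\mathbf{A}=(A_1,\dots,A_n)$ with $A_i\subseteq C$, and a committee size $k$ with $1\le k\le |C|$. For $\ell\in\mathbb{N}$, a set $N'\subseteq N$ is an $\ell$-cohesive group if $|N'|\ge \ell\cdot n/k$ and $|\bigcap_{i\in N'}A_i|\ge \ell$; a $1$-cohesive group is called a cohesive group. A committee $W\subseteq C$ with $|W|=k$ achieves JR degree $c$ if every cohesive group contains at least $c$ voters $i$ with $|A_i\cap W|\ge 1$; the JR degree of $W$ is the largest such $c$. $W$ achieves EJR degree $c$ if for every $\ell\in\{1,\dots,k\}$ every $\ell$-cohesive group contains at least $c$ voters $i$ with $|A_i\cap W|\ge \ell$; the EJR degree of $W$ is the largest such $c$. The maximum JR (resp. EJR) degree of an instance is the maximum of the JR (resp. EJR) degree over all size-$k$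 committees. Only instances with at least one cohesive group are considered. *)

From mathcomp Require Import all_boot all_order all_algebra.
From mathcomp Require Import reals.
Set Implicit Arguments. Unset Strict Implicit. Unset Printing Implicit Defensive.

Section ABC.
Variables (V C : finType).
Variable A : V -> {set C}.
Variable k : nat.

(* N' is an l-cohesive group: |N'| >= l * n / k (k >= 1) and the
   voters of N' jointly approve at least l candidates. *)
Definition cohesive (l : nat) (N' : {set V}) : bool :=
  (l * #|V| <= #|N'| * k)%N && (l <= #|\bigcap_(i in N') A i|)%N.

Definition has_cohesive_group : bool := [exists N' : {set V}, cohesive 1 N'].

Definition achieves_JR (W : {set C}) (c : nat) : bool :=
  [forall N' : {set V}, cohesive 1 N' ==>
     (c <= #|[set i in N' | (1 <= #|A i :&: W|)%N]|)%N].

Definition achieves_EJR (W : {set C}) (c : nat) : bool :=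
  [forall l : 'I_k.+1, (1 <= l)%N ==> [forall N' : {set V}, cohesive l N' ==>
     (c <= #|[set i in N' | (l <= #|A i :&: W|)%N]|)%N]].

(* the degree is the largest achieved c; when a cohesive group exists every
   achieved c is at most n = #|V|, so the search range 0..n is exhaustive,
   and c = 0 is always achieved. *)
Definition JR_degree (W : {set C}) : nat :=
  \max_(c < #|V|.+1 | achieves_JR W c) c.
Definition EJR_degree (W : {set C}) : nat :=
  \max_(c < #|V|.+1 | achieves_EJR W c) c.

Definition max_JR_degree : nat := \max_(W : {set C} | #|W| == k) JR_degree W.
Definition max_EJR_degree : nat := \max_(W : {set C} | #|W| == k) EJR_degree W.

End ABC.

From mathcomp Require Import all_boot all_order all_algebra.
From mathcomp Require Import reals.
From mathcomp Require Import zify.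
Import Order.TTheory GRing.Theory Num.Theory.
Set Implicit Arguments. Unset Strict Implicit. Unset Printing Implicit Defensive.

(* Take k >= 3 with k > 2 gamma and k^2 voters split into k blocks of k.  Every
   voter approves the candidate of its block; the first two voters of each
   block (the 2k "bridge" voters) also approve two extra candidates.  The
   committee of all block candidates represents every voter, so its JR degree
   is at least k, yet the bridge voters form a 2-cohesive group in which nobody
   has two representatives, so its EJR degree is 0.  Any other committee misses
   some block candidate, and of that block only its two bridge voters can be
   represented: its JR degree, hence also its EJR degree, is at most 2.
   Finally, replacing the first two block candidates by the extra ones gives EJR
   degree at least 1, so the maximum EJR degree is 1 or 2 while the maximum JR
   degree is at least k. *)

Lemma card_ord_lt n m : m <= n -> #|[set i : 'I_n | i < m]| = m.
Proof.
move=> le_mn; have widen_inj : injective (widen_ord le_mn).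
  by move=> i j /(congr1 val) /= eq_ij; apply: val_inj.
rewrite -[RHS]card_ord -cardsT -(card_imset _ widen_inj).
apply: eq_card => i; rewrite inE.
apply/idP/imsetP => [lt_im | [j _ ->] /=]; last exact: ltn_ord.
by exists (Ordinal lt_im) => //; apply: val_inj.
Qed.

Section Degrees.
Variables (V C : finType) (A : V -> {set C}) (k : nat).

Lemma JR_degree_le_satisfied (W : {set C}) (N : {set V}) :
  cohesive A k 1 N -> JR_degree A k W <= #|[set i in N | 1 <= #|A i :&: W|]|.
Proof. by move=> cohN; apply/bigmax_leqP => c /forallP/(_ N); rewrite cohN. Qed.

Lemma EJR_degree_le_satisfied (W : {set C}) (N : {set V}) (l : 'I_k.+1) :
  0 < l -> cohesive A k l N ->
  EJR_degree A k W <= #|[set i in N | l <= #|A i :&: W|]|.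
Proof.
move=> l_gt0 cohN; apply/bigmax_leqP => c /forallP/(_ l).
by rewrite l_gt0 => /forallP/(_ N); rewrite cohN.
Qed.

Lemma leq_JR_degree (W : {set C}) c :
  c <= #|V| -> achieves_JR A k W c -> c <= JR_degree A k W.
Proof. by move=> le_cV; apply: (leq_bigmax_cond (Ordinal (le_cV : c < #|V|.+1))). Qed.

Lemma leq_EJR_degree (W : {set C}) c :
  c <= #|V| -> achieves_EJR A k W c -> c <= EJR_degree A k W.
Proof. by move=> le_cV; apply: (leq_bigmax_cond (Ordinal (le_cV : c < #|V|.+1))). Qed.

Lemma EJR_degree_le_JR_degree (W : {set C}) :
  0 < k -> EJR_degree A k W <= JR_degree A k W.
Proof.
move=> k_gt0; apply/bigmax_leqP => c EJRc; apply: leq_bigmax_cond.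
apply/forallP => N; apply/implyP => cohN.
by move/forallP: EJRc => /(_ (Ordinal (k_gt0 : 1 < k.+1))) /forallP /(_ N) /implyP; apply.
Qed.

Lemma leq_max_JR_degree (W : {set C}) :
  #|W| = k -> JR_degree A k W <= max_JR_degree A k.
Proof. by move/eqP; apply: leq_bigmax_cond. Qed.

Lemma leq_max_EJR_degree (W : {set C}) :
  #|W| = k -> EJR_degree A k W <= max_EJR_degree A k.
Proof. by move/eqP; apply: leq_bigmax_cond. Qed.

Lemma max_EJR_degree_le d :
  (forall W : {set C}, #|W| = k -> EJR_degree A k W <= d) -> max_EJR_degree A k <= d.
Proof. by move=> EJR_le; apply/bigmax_leqP => W /eqP /EJR_le. Qed.

End Degrees.

Section Construction.
Variable K : nat.
Local Notation k := K.+3.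
Local Notation voter := 'I_(k * k).
Local Notation candidate := 'I_k.+2.

Lemma block_proof (v : voter) : v %/ k < k.
Proof. by rewrite ltn_divLR. Qed.

Definition block (v : voter) : 'I_k := Ordinal (block_proof v).
Definition slot (v : voter) : 'I_k := Ordinal (ltn_pmod v (ltn0Sn K.+2)).
Definition bridge (v : voter) : bool := slot v < 2.

Lemma voter_proof (js : 'I_k * 'I_k) : js.1 * k + js.2 < k * k.
Proof. by have := ltn_ord js.1; have := ltn_ord js.2; nia. Qed.

Definition voter_at (js : 'I_k * 'I_k) : voter := Ordinal (voter_proof js).

Lemma block_slotK : cancel (fun v => (block v, slot v)) voter_at.
Proof. by move=> v; apply: val_inj; rewrite /= -divn_eq. Qed.

Lemma voter_atK : cancel voter_at (fun v => (block v, slot v)).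
Proof.
move=> [j s]; have lt_sk := ltn_ord s.
by congr pair; apply: val_inj; rewrite /= ?divnMDl ?divn_small ?addn0 ?modnMDl ?modn_small.
Qed.

Lemma card_block_slot (B S : {set 'I_k}) :
  #|[set v : voter | (block v \in B) && (slot v \in S)]| = #|B| * #|S|.
Proof.
rewrite -cardsX -(on_card_preimset (onW_bij _ (Bijective block_slotK voter_atK))).
by apply: eq_card => v; rewrite !inE.
Qed.

Definition block_voters (j : 'I_k) : {set voter} := [set v | block v == j].

Lemma card_block_voters j : #|block_voters j| = k.
Proof.
transitivity #|[set v | (block v \in [set j]) && (slot v \in setT)]|.
  by apply: eq_card => v; rewrite !inE andbT.
by rewrite card_block_slot cards1 cardsT card_ord mul1n.
Qed.

Lemma card_bridges : #|[set v | bridge v]| = k * 2.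
Proof.
transitivity #|[set v | (block v \in setT) && (slot v \in [set s : 'I_k | s < 2])]|.
  by apply: eq_card => v; rewrite !inE.
by rewrite card_block_slot cardsT card_ord card_ord_lt.
Qed.

Lemma card_bridges_in_block j : #|[set v | (block v == j) && bridge v]| = 2.
Proof.
transitivity #|[set v | (block v \in [set j]) && (slot v \in [set s : 'I_k | s < 2])]|.
  by apply: eq_card => v; rewrite !inE.
by rewrite card_block_slot cards1 mul1n card_ord_lt.
Qed.

Lemma card_nonbridges_in_block j : #|[set v | (block v == j) && ~~ bridge v]| = k - 2.
Proof.
transitivity #|[set v | (block v \in [set j]) && (slot v \in ~: [set s : 'I_k | s < 2])]|.
  by apply: eq_card => v; rewrite !inE.
by rewrite card_block_slot cards1 mul1n cardsCs setCK card_ord card_ord_lt.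
Qed.

Definition block_cand (j : 'I_k) : candidate := widen_ord (leqW (leqnSn k)) j.
Definition extra1 : candidate := Ordinal (leqW (ltnSn k)).
Definition extra2 : candidate := ord_max.

Definition ballot (v : voter) : {set candidate} :=
  block_cand (block v) |: (if bridge v then [set extra1; extra2] else set0).

Lemma block_cand_inj : injective block_cand.
Proof. by move=> i j /(congr1 val) /= eq_ij; apply: val_inj. Qed.

Lemma extra1_neq2 : extra1 != extra2.
Proof. by rewrite -val_eqE /= neq_ltn ltnSn. Qed.

Lemma block_cand_notin_extras j : block_cand j \notin [set extra1; extra2].
Proof. by rewrite !inE -!val_eqE /= !ltn_eqF // leqW. Qed.

Lemma ballot_nonbridge v : ~~ bridge v -> ballot v = [set block_cand (block v)].
Proof. by move/negbTE => nb; rewrite /ballot nb setU0. Qed.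

Lemma extras_sub_ballot v : bridge v -> [set extra1; extra2] \subset ballot v.
Proof. by move=> b; rewrite /ballot b subsetUr. Qed.

Lemma block_cand_in_ballot v j : (block_cand j \in ballot v) = (block v == j).
Proof.
rewrite /ballot in_setU1 (inj_eq block_cand_inj) eq_sym.
by case: (bridge v); rewrite ?(negbTE (block_cand_notin_extras j)) ?in_set0 orbF.
Qed.

Definition block_committee : {set candidate} := block_cand @: setT.
Definition shifted_committee : {set candidate} := [set c : candidate | 2 <= c].

Lemma card_block_committee : #|block_committee| = k.
Proof. by rewrite card_imset ?cardsT ?card_ord //; exact: block_cand_inj. Qed.

Lemma card_shifted_committee : #|shifted_committee| = k.
Proof.
transitivity #|~: [set c : candidate | c < 2]|.
  by apply: eq_card => c; rewrite !inE -leqNgt.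
by rewrite cardsCs setCK card_ord card_ord_lt.
Qed.

Lemma ballotI_block_committee v :
  ballot v :&: block_committee = [set block_cand (block v)].
Proof.
apply/setP => c; rewrite in_setI in_set1; apply/andP/eqP => [[c_in /imsetP[j _ c_eq]] | ->].
  by move: c_in; rewrite c_eq block_cand_in_ballot => /eqP ->.
by split; [rewrite block_cand_in_ballot | exact: imset_f].
Qed.

Lemma cohesive_size l (N : {set voter}) : cohesive ballot k l N -> l * k <= #|N|.
Proof. by case/andP; rewrite card_ord mulnA leq_pmul2r. Qed.

Lemma cohesive_block_voters j : cohesive ballot k 1 (block_voters j).
Proof.
rewrite /cohesive card_ord card_block_voters mul1n leqnn /=.
apply/card_gt0P; exists (block_cand j); apply/bigcapP => v.
by rewrite inE block_cand_in_ballot.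
Qed.

Lemma cohesive_bridges : cohesive ballot k 2 [set v | bridge v].
Proof.
rewrite /cohesive card_ord card_bridges mulnAC mulnC leqnn /=.
apply: leq_trans (_ : 2 <= #|[set extra1; extra2]|) (subset_leq_card _).
  by rewrite cards2 extra1_neq2.
by apply/bigcapsP => v; rewrite inE; exact: extras_sub_ballot.
Qed.

Lemma common_in_block (N : {set voter}) j :
  block_cand j \in \bigcap_(v in N) ballot v -> N \subset block_voters j.
Proof.
by move=> /bigcapP common; apply/subsetP => v vN; rewrite inE -block_cand_in_ballot common.
Qed.

Lemma cohesive_common_extra l (N : {set voter}) c :
  2 <= l -> cohesive ballot k l N -> c \in \bigcap_(v in N) ballot v -> k <= c.
Proof.
move=> l_ge2 cohN c_common; rewrite leqNgt; apply/negP => lt_ck.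
have c_eq : c = block_cand (Ordinal lt_ck) by apply: val_inj.
move: c_common; rewrite c_eq => /common_in_block/subset_leq_card.
rewrite card_block_voters; have := cohesive_size cohN; have := leq_mul l_ge2 (leqnn k).
lia.
Qed.

Lemma cohesive_has_bridge (N : {set voter}) :
  cohesive ballot k 1 N -> exists2 v, v \in N & bridge v.
Proof.
move=> cohN; apply/exists_inP; apply: contraT => /exists_inPn no_bridge.
have N_size := cohesive_size cohN; rewrite mul1n in N_size.
have [v0 v0N] : exists v0, v0 \in N by apply/card_gt0P; lia.
have [c c_common] : exists c, c \in \bigcap_(v in N) ballot v.
  by apply/card_gt0P; case/andP: cohN.
have c_eq : c = block_cand (block v0).
  by apply/set1P; rewrite -ballot_nonbridge ?no_bridge //; move/bigcapP: c_common; apply.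
rewrite c_eq in c_common.
have : N \subset [set v | (block v == block v0) && ~~ bridge v].
  apply/subsetP => v vN; rewrite inE no_bridge // andbT.
  by have := subsetP (common_in_block c_common) v vN; rewrite inE.
by move/subset_leq_card; rewrite card_nonbridges_in_block; lia.
Qed.

Lemma JR_degree_block_committee : k <= JR_degree ballot k block_committee.
Proof.
apply: leq_JR_degree; first by rewrite card_ord leq_pmull.
apply/forallP => N; apply/implyP => cohN.
have := cohesive_size cohN; rewrite mul1n => /leq_trans; apply.
apply: subset_leq_card; apply/subsetP => v vN.
by rewrite inE vN ballotI_block_committee cards1.
Qed.

Lemma EJR_degree_block_committee : EJR_degree ballot k block_committee = 0.
Proof.
apply/eqP; rewrite -leqn0; have two_lt : 2 < k.+1 by [].
apply: leq_trans (EJR_degree_le_satisfied (l := Ordinal two_lt) block_committee isT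
  cohesive_bridges) _.
rewrite leqn0 cards_eq0; apply/eqP/setP => v.
by rewrite !inE ballotI_block_committee cards1 andbF.
Qed.

Lemma JR_degree_other_committee (W : {set candidate}) :
  #|W| = k -> W != block_committee -> JR_degree ballot k W <= 2.
Proof.
move=> cardW W_neq.
have [_ /imsetP[j _ ->] j_notin_W] : exists2 c, c \in block_committee & c \notin W.
  apply/subsetPn; apply: contraNN W_neq => sub_W.
  by rewrite eq_sym eqEcard sub_W cardW card_block_committee leqnn.
apply: leq_trans (JR_degree_le_satisfied W (cohesive_block_voters j)) _.
rewrite -(card_bridges_in_block j); apply: subset_leq_card; apply/subsetP => v.
rewrite !inE => /andP[/eqP block_v]; rewrite block_v eqxx /=.
apply: contraTT => /ballot_nonbridge ->.
by rewrite -leqNgt leqn0 cards_eq0 setI_eq0 disjoints1 block_v.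
Qed.

Lemma shifted_committee_represents l (N : {set voter}) :
  0 < l -> cohesive ballot k l N ->
  exists2 v, v \in N & l <= #|ballot v :&: shifted_committee|.
Proof.
move=> l_gt0 cohN; case: (ltnP 1 l) => [l_ge2 | l_le1].
  have [v vN] : exists v, v \in N.
    by apply/card_gt0P; apply: leq_trans (cohesive_size cohN); rewrite muln_gt0 l_gt0.
  exists v => //; apply: leq_trans (proj2 (andP cohN)) (subset_leq_card _).
  apply/subsetP => c c_common; rewrite in_setI (bigcapP c_common v vN) inE.
  exact: leq_trans (cohesive_common_extra l_ge2 cohN c_common).
have l_eq1 : l = 1 by apply/eqP; rewrite eqn_leq l_le1.
rewrite l_eq1 in cohN *; have [v vN bridge_v] := cohesive_has_bridge cohN.
exists v => //; apply/card_gt0P; exists extra1.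
by rewrite in_setI (subsetP (extras_sub_ballot bridge_v)) ?set21 // inE.
Qed.

Lemma EJR_degree_shifted_committee : 0 < EJR_degree ballot k shifted_committee.
Proof.
apply: leq_EJR_degree; first by rewrite card_ord muln_gt0.
apply/forallP => l; apply/implyP => l_gt0; apply/forallP => N; apply/implyP => cohN.
have [v vN sat_v] := shifted_committee_represents l_gt0 cohN.
by apply/card_gt0P; exists v; rewrite inE vN.
Qed.

End Construction.

Local Open Scope ring_scope.

Theorem proposition1 (R : realType) (gamma : R) (hgamma : 0 < gamma) :
  exists (n m : nat) (A : 'I_n -> {set 'I_m}) (k : nat),
    [/\ [&& (0 < n)%N, (1 <= k <= m)%N & has_cohesive_group A k],
        gamma < (max_JR_degree A k)%:R / (max_EJR_degree A k)%:R :> R,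
        (forall W : {set 'I_m}, #|W| = k ->
           EJR_degree A k W = max_EJR_degree A k ->
           (JR_degree A k W)%:R <= (max_JR_degree A k)%:R / gamma :> R)
      & (forall W : {set 'I_m}, #|W| = k ->
           JR_degree A k W = max_JR_degree A k ->
           (EJR_degree A k W)%:R <= (max_EJR_degree A k)%:R / gamma :> R)].
Proof.
pose K := Num.Def.archi_bound (2 * gamma).
have gammaK : 2 * gamma < K%:R by apply: archi_boundP; rewrite mulr_ge0 // ltW.
exists (K.+3 * K.+3)%N, K.+4.+1, (@ballot K), K.+3.
set MJ := max_JR_degree _ _; set ME := max_EJR_degree _ _.
have k_le_MJ : (K.+3 <= MJ)%N.
  apply: leq_trans (JR_degree_block_committee K) _.
  exact: leq_max_JR_degree (card_block_committee K).
have ME_gt0 : (0 < ME)%N.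
  apply: leq_trans (EJR_degree_shifted_committee K) _.
  exact: leq_max_EJR_degree (card_shifted_committee K).
have ME_le2 : (ME <= 2)%N.
  apply: max_EJR_degree_le => W cardW.
  have [-> | W_neq] := eqVneq W (block_committee K).
    by rewrite EJR_degree_block_committee.
  exact: leq_trans (EJR_degree_le_JR_degree _ _ _) (JR_degree_other_committee cardW W_neq).
have gamma2_lt_MJ : gamma * 2 < MJ%:R.
  by rewrite mulrC (lt_le_trans gammaK) // ler_nat; lia.
split.
- rewrite muln_gt0 /= leqW ?leqnSn //=.
  by apply/existsP; exists (block_voters ord0); exact: cohesive_block_voters.
- by rewrite ltr_pdivlMr ?ltr0n // (le_lt_trans _ gamma2_lt_MJ) // ler_pM2l // ler_nat.
- move=> W cardW EJR_W; rewrite ler_pdivlMr // (le_trans _ (ltW gamma2_lt_MJ)) //.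
  rewrite mulrC ler_pM2l // ler_nat JR_degree_other_committee //.
  by apply: contra_eqN EJR_W => /eqP ->; rewrite EJR_degree_block_committee eq_sym -lt0n.
- move=> W cardW JR_W; have [-> | W_neq] := eqVneq W (block_committee K).
    by rewrite EJR_degree_block_committee divr_ge0 // ltW.
  by have := JR_degree_other_committee cardW W_neq; rewrite JR_W => /(leq_trans k_le_MJ).
Qed.
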